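(* Let $K\subseteq\mathbb{R}^{n}$ be compact and let $T\subseteq\mathbb{R}^{n}$ be compact with non-empty interior. Then \[ \max\left\{\frac{\mathrm{Vol}(K)}{\mathrm{Vol}(T)},1\right\}\le M_{\omega}(K,T). \]
   Context: $\mathrm{Vol}$ is Lebesgue measure. $\mathbbm{1}_A$ is the indicator of $A$. $\mathcal{D}_+^n$ is the set of non-negative finite discrete measures on $\mathbb{R}^n$ (finite sums $\sum_i\omega_i\delta_{x_i}$, $\omega_i\ge0$); $(\nu*\mathbbm{1}_T)(x)=\int\mathbbm{1}_T(x-y)\,d\nu(y)$. $M_\omega(K,T)=\sup\{\nu(K):\nu\in\mathcal{D}_+^n,\ \nu*\mathbbm{1}_T\le1\text{ on }\mathbb{R}^n\}$. *)

From HB Require Import structures.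
From mathcomp Require Import all_boot all_order all_algebra.
From mathcomp Require Import all_classical all_reals all_analysis.
Set Implicit Arguments. Unset Strict Implicit. Unset Printing Implicit Defensive.
Import Order.TTheory GRing.Theory Num.Theory.
Import numFieldNormedType.Exports.
Local Open Scope classical_set_scope.
Local Open Scope ring_scope.

Section Defs.
Variables (R : realType) (n : nat).

Definition box (a b : 'I_n -> R) : set 'rV[R]_n :=
  [set x | forall i : 'I_n, a i <= x ord0 i <= b i].

Definition boxvol (a b : 'I_n -> R) : R :=
  \prod_(i < n) Num.max 0 (b i - a i).

(* On Lebesgue measurable sets (in particular
   compact sets) this is the n-dimensional Lebesgue measure Vol. *)
Definition lebesgue_outer (A : set 'rV[R]_n) : \bar R :=
  ereal_inf [set s : \bar R | exists (a b : nat -> 'I_n -> R),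
     A `<=` \bigcup_k box (a k) (b k) /\
     s = (\sum_(0 <= k <oo) (boxvol (a k) (b k))%:E)%E].

(* Vol, real-valued (finite on bounded sets, e.g. compact sets) *)
Definition Vol (A : set 'rV[R]_n) : R := fine (lebesgue_outer A).

(* A non-negative finite discrete measure  nu = sum_i w_i delta_{x_i}
   is represented by the finite list of its atoms (w_i, x_i), w_i >= 0. *)
Definition dmeasure (s : seq (R * 'rV[R]_n)) (A : set 'rV[R]_n) : R :=
  \sum_(p <- s) p.1 * \1_A p.2.

(* (nu * 1_T)(x) = int 1_T(x - y) dnu(y) *)
Definition dconv (s : seq (R * 'rV[R]_n)) (T : set 'rV[R]_n) (x : 'rV[R]_n) : R :=
  \sum_(p <- s) p.1 * \1_T (x - p.2).

Definition discrete_nonneg (s : seq (R * 'rV[R]_n)) : Prop :=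
  forall p, p \in s -> 0 <= p.1.

Definition M_omega (K T : set 'rV[R]_n) : \bar R :=
  ereal_sup [set (dmeasure s K)%:E | s in
    [set s | discrete_nonneg s /\ forall x, dconv s T x <= 1]].

End Defs.

From HB Require Import structures.
From mathcomp Require Import all_boot all_order all_algebra.
From mathcomp Require Import all_classical all_reals all_analysis.
From mathcomp Require Import unstable ring lra zify finmap.
(* A single unit atom at a point of [K] already gives [M_omega K T >= 1].
   For the volume ratio fix [r] with [r * Vol T < Vol K] and a grid of mesh [d],
   and put an atom of weight [d^n r / Vol K] at one point of [K] in every grid
   cell meeting [K].  These cells cover [K], so there are at least [Vol K / d^n]
   of them and the measure of [K] is at least [r].  By compactness [T], hence
   every [x - T], is covered by finitely many open boxes of total volume at most
   [Vol T + e]; a box with sides [l_i] meets at most [prod (l_i + 2d) / d^n]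
   cells, so for small [d] the convolution is at most
   [r (Vol T + 2e) / Vol K <= 1]. *)

Set Implicit Arguments. Unset Strict Implicit. Unset Printing Implicit Defensive.
Import Order.TTheory GRing.Theory Num.Theory.
Import numFieldNormedType.Exports.
Local Open Scope classical_set_scope.
Local Open Scope ring_scope.

Lemma prod_addr_le (R : realFieldType) (I : Type) (r : seq I) (m : I -> R) (t : R) :
  (forall i, 0 <= m i) -> 0 <= t <= 1 ->
  \prod_(i <- r) (m i + t) <=
  \prod_(i <- r) m i + t * ((size r)%:R * \prod_(i <- r) (m i + 1)).
Proof.
move=> m0 /andP[t0 t1]; elim: r => [|x r IH]; first by rewrite !big_nil mul0r mulr0 addr0.
rewrite !big_cons /=.
set P := \prod_(i <- r) (m i + t) in IH *.
set A := \prod_(i <- r) m i in IH *.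
set C := \prod_(i <- r) (m i + 1) in IH *.
set s := (size r)%:R in IH *.
have s0 : 0 <= s by [].
have mx := m0 x.
have P0 : 0 <= P by apply: prodr_ge0 => i _; have := m0 i; lra.
have C0 : 0 <= C by apply: prodr_ge0 => i _; have := m0 i; lra.
have PC : P <= C by apply: ler_prod => i _; have := m0 i; lra.
have mP : m x * P <= m x * (A + t * (s * C)) by apply: ler_wpM2l.
have tP : t * P <= t * C by apply: ler_wpM2l.
have tC : 0 <= t * C * (s + m x) by apply: mulr_ge0; [apply: mulr_ge0|lra].
rewrite -addn1 natrD -/s.
have -> : (m x + t) * P = m x * P + t * P by ring.
have -> : t * ((s + 1) * ((m x + 1) * C)) =
  m x * (t * (s * C)) + t * C + t * C * (s + m x) by ring.
lra.
Qed.

Lemma sum_prod_addr_le (R : realFieldType) (I J : Type) (s : seq J) (r : seq I)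
    (m : J -> I -> R) (e : R) :
  (forall j i, 0 <= m j i) -> 0 < e ->
  exists2 t, 0 < t &
    \sum_(j <- s) \prod_(i <- r) (m j i + t) <= \sum_(j <- s) \prod_(i <- r) m j i + e.
Proof.
move=> m0 e0.
pose C := \sum_(j <- s) (size r)%:R * \prod_(i <- r) (m j i + 1).
have C0 : 0 <= C.
  apply: sumr_ge0 => j _; apply: mulr_ge0 => //.
  by apply: prodr_ge0 => i _; apply: addr_ge0.
pose t := Num.min 1 (e / (C + 1)).
have t0 : 0 < t by rewrite lt_min ltr01 divr_gt0 //; lra.
have tC : t * C <= e.
  have te : t <= e / (C + 1) by rewrite ge_min lexx orbT.
  apply: le_trans (_ : e / (C + 1) * C <= e); first exact: ler_wpM2r.
  rewrite mulrAC ler_pdivrMr; nra.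
exists t => //; rewrite -(lerD2l (\sum_(j <- s) \prod_(i <- r) m j i)) in tC.
apply: le_trans tC; rewrite mulr_sumr -big_split /=.
apply: ler_sum => j _; apply: prod_addr_le => //.
by rewrite ltW //= ge_min lexx.
Qed.

Lemma count_le_sum_cover (T K : Type) (a : pred T) (b : K -> pred T) (l : seq K) (s : seq T) :
  (forall z, a z -> has (fun k => b k z) l) ->
  (count a s <= \sum_(k <- l) count (b k) s)%N.
Proof.
move=> cover; elim: s => [|z s IH]; first by rewrite big1.
rewrite /= big_split /=; apply: leq_add => //.
case az: (a z) => //; have := cover z az.
elim: l {IH cover} => [//|k l IHl] /=; rewrite big_cons.
by case: (b k z) => /= [_|/IHl]; rewrite ?addn_gt0.
Qed.

Lemma sum_mul_indic (R : pzRingType) (T U : Type) (A : set U) (f : T -> U) (w : R) (s : seq T) :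
  \sum_(z <- s) w * \1_A (f z) = w * (count (fun z => f z \in A) s)%:R.
Proof.
elim: s => [|z s IH]; first by rewrite big_nil mulr0.
by rewrite big_cons IH /= indicE natrD mulrDr.
Qed.

Section Boxes.
Variables (R : realType) (n : nat).

Lemma boxvol_ge0 (a b : 'I_n -> R) : 0 <= boxvol a b.
Proof. by apply: prodr_ge0 => i _; rewrite le_max lexx. Qed.

Lemma lebesgue_outer_ge0 (A : set 'rV[R]_n) : (0 <= lebesgue_outer A)%E.
Proof.
apply: le_ereal_inf_tmp => _ [a [b [_ ->]]].
by apply: nneseries_ge0 => k _ _; rewrite lee_fin boxvol_ge0.
Qed.

Lemma Vol_ge0 (A : set 'rV[R]_n) : 0 <= Vol A.
Proof. exact: fine_ge0 (lebesgue_outer_ge0 A). Qed.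

(* [Vol] is [fine] of the outer measure, which is [0] at [+oo]. *)
Lemma lebesgue_outer_Vol (A : set 'rV[R]_n) : 0 < Vol A -> lebesgue_outer A = (Vol A)%:E.
Proof.
rewrite /Vol; have := lebesgue_outer_ge0 A.
by case: (lebesgue_outer A) => [x _ _||] //=; rewrite ltxx.
Qed.

Lemma Vol_le_lebesgue_outer (A : set 'rV[R]_n) (c : R) :
  (lebesgue_outer A <= c%:E)%E -> Vol A <= c.
Proof.
rewrite /Vol; have := lebesgue_outer_ge0 A.
by case: (lebesgue_outer A) => [x _||] //=; rewrite lee_fin.
Qed.

Lemma lebesgue_outer_le_boxes (A : set 'rV[R]_n) (bs : seq (('I_n -> R) * ('I_n -> R))) :
  (0 < n)%N -> (forall x, A x -> exists2 p, p \in bs & box p.1 p.2 x) ->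
  (lebesgue_outer A <= (\sum_(p <- bs) boxvol p.1 p.2)%:E)%E.
Proof.
move=> n0 Acov.
(* Beyond [size bs] the boxes are empty, of volume [0] since [n > 0]. *)
pose p0 := (fun=> 1, fun=> 0) : ('I_n -> R) * ('I_n -> R).
pose a k := (nth p0 bs k).1; pose b k := (nth p0 bs k).2.
apply: (@le_trans _ _ (\sum_(0 <= k <oo) (boxvol (a k) (b k))%:E)%E).
  apply: ereal_inf_lbound; exists a, b; split => // x /Acov[p pbs px].
  by exists (index p bs) => //; rewrite /a /b nth_index.
rewrite (nneseries_split 0 (size bs)); last by move=> k _; rewrite lee_fin boxvol_ge0.
rewrite add0n eseries0 ?adde0 ?sumEFin ?lee_fin ?(big_nth p0) //.
move=> k kbs _; rewrite /a /b nth_default // /boxvol.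
rewrite (eq_bigr (fun=> 0)) => [|i _]; last by rewrite max_l // sub0r lerN10.
by rewrite prodr_const card_ord expr0n gtn_eqF.
Qed.

Definition obox (a b : 'I_n -> R) : set 'rV[R]_n :=
  [set x | forall i : 'I_n, a i < x ord0 i < b i].

Lemma obox_open (a b : 'I_n -> R) : open (obox a b).
Proof.
rewrite openE => x xab.
exists (fun (i : 'I_1) j => `]a j, b j[%classic).
  move=> i j /=; apply: open_nbhs_nbhs; split; first exact: interval_open.
  by rewrite /= in_itv /= (ord1 i); exact: xab.
by move=> y /= yab i; have := yab ord0 i; rewrite /= in_itv.
Qed.

Lemma boxvol_enlarge (a b : 'I_n -> R) (e : R) : 0 < e ->
  exists eta, 0 < eta /\ boxvol (fun i => a i - eta) (fun i => b i + eta) <= boxvol a b + e.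
Proof.
move=> e0; pose m (_ : unit) i := Num.max 0 (b i - a i).
have [|t t0] := @sum_prod_addr_le R _ _ [:: tt] (index_enum 'I_n) m e _ e0.
  by move=> j i; rewrite le_max lexx.
rewrite !big_seq1 => mt; exists (t / 2); split; first by lra.
apply: le_trans mt; apply: ler_prod => i _; rewrite le_max lexx /=.
have -> : b i + t / 2 - (a i - t / 2) = (b i - a i) + t by field.
have m0 : 0 <= m tt i by rewrite le_max lexx.
have bam : b i - a i <= m tt i by rewrite le_max lexx orbT.
by rewrite ge_max; apply/andP; split; lra.
Qed.

Lemma lebesgue_outer_obox_cover (A : set 'rV[R]_n) (v e : R) :
  lebesgue_outer A = v%:E -> 0 < e ->
  exists lo hi : nat -> 'I_n -> R, A `<=` \bigcup_k obox (lo k) (hi k) /\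
    (\sum_(0 <= k <oo) (boxvol (lo k) (hi k))%:E <= (v + e)%:E)%E.
Proof.
move=> vA e0.
have e20 : 0 < e / 2 by rewrite divr_gt0.
have finA : lebesgue_outer A \is a fin_num by rewrite vA.
have [_ [a [b [Acov ->]]]] := lb_ereal_inf_adherent e20 finA.
rewrite -/(lebesgue_outer A) vA => ab_lt.
(* Enlarge the [k]th closed box of a cover to an open one at cost [e / 2^(k+2)]. *)
have eps_gt0 k : 0 < (e / 2) / (2 ^ k.+1)%:R :> R by rewrite divr_gt0 // ltr0n expn_gt0.
have [eta eta_spec] := choice (fun k => boxvol_enlarge (a k) (b k) (eps_gt0 k)).
exists (fun k i => a k i - eta k), (fun k i => b k i + eta k); split.
  move=> x /Acov[k _ abx]; exists k => // i; have /andP[] := abx i.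
  by have := (eta_spec k).1; lra.
apply: (@le_trans _ _ (\sum_(0 <= k <oo) ((boxvol (a k) (b k))%:E +
    ((e / 2) / (2 ^ k.+1)%:R)%:E))%E).
  apply: lee_nneseries => [k _ _|k _]; first by rewrite lee_fin boxvol_ge0.
  by rewrite -EFinD lee_fin (eta_spec k).2.
apply: le_trans (epsilon_trick _ _ _) _ => [k||]; first by rewrite lee_fin boxvol_ge0.
  exact: ltW.
by apply: le_trans (leeD (ltW ab_lt) (lexx _)) _; rewrite -!EFinD lee_fin; lra.
Qed.

Lemma compact_obox_finite_cover (A : set 'rV[R]_n) (v e : R) : compact A ->
  lebesgue_outer A = v%:E -> 0 < e ->
  exists (s : seq nat) (lo hi : nat -> 'I_n -> R),
    (forall x, A x -> exists2 k, k \in s & obox (lo k) (hi k) x) /\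
    \sum_(k <- s) boxvol (lo k) (hi k) <= v + e.
Proof.
move=> cA vA e0; have [lo [hi [Acov ser]]] := lebesgue_outer_obox_cover vA e0.
move: cA; rewrite compact_cover => /(_ nat setT (fun k => obox (lo k) (hi k))).
case=> [k _|x /Acov[k _ x_k]|D _ Dcov]; [exact: obox_open | by exists k|].
pose N := (\max_(k <- enum_fset D) k).+1.
exists [seq k <- iota 0 N | k \in D], lo, hi; split.
  move=> x /Dcov[k kD x_k]; exists k => //.
  by rewrite mem_filter kD mem_iota add0n ltnS leq_bigmax_seq.
rewrite -lee_fin; apply: le_trans ser.
rewrite big_filter -sumEFin.
apply: le_trans (nneseries_lim_ge N _) => [|k _ _]; last by rewrite lee_fin boxvol_ge0.
rewrite big_mkcond /= [in leRHS]/index_iota subn0.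
by apply: lee_sum => k _; case: ifP => // _; rewrite lee_fin boxvol_ge0.
Qed.

End Boxes.

Section Cells.
Variables (R : realType) (n : nat).

Definition cell (d : R) (z : 'rV[R]_n) : {ffun 'I_n -> int} :=
  [ffun i => Num.floor (z ord0 i / d)].

Lemma box_cell (d : R) (z : 'rV[R]_n) : 0 < d ->
  box (fun i => d * (cell d z i)%:~R) (fun i => d * (cell d z i)%:~R + d) z.
Proof.
move=> d0 i; rewrite ffunE; have /andP[zl zh] := floor_itv (z ord0 i / d).
apply/andP; split; first by rewrite mulrC -ler_pdivlMr.
by move: zh; rewrite intrD ltr_pdivrMr // mulrDl mul1r [d * _]mulrC => zh; lra.
Qed.

Lemma boxvol_cell (d : R) (c : 'I_n -> R) : 0 < d ->
  boxvol (fun i => d * c i) (fun i => d * c i + d) = d ^+ n.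
Proof.
move=> d0; rewrite /boxvol (eq_bigr (fun=> d)) => [|i _]; first by rewrite prodr_const card_ord.
by rewrite addrAC subrr add0r max_r // ltW.
Qed.

Lemma le_floor_div (d x y : R) : 0 < d -> x <= y -> Num.floor (x / d) <= Num.floor (y / d).
Proof. by move=> d0 xy; apply: le_floor; rewrite ler_pM2r ?invr_gt0. Qed.

(* The cells meeting the box [lo, hi] are enumerated by [cellg], whose domain has
   [cellN d lo hi i] choices in the [i]th coordinate. *)
Definition cellN (d : R) (lo hi : 'I_n -> R) (i : 'I_n) : nat :=
  absz (Num.max 0 (Num.floor (hi i / d) - Num.floor (lo i / d) + 1)).

Definition cellg (d : R) (lo hi : 'I_n -> R)
    (j : {dffun forall i, 'I_(cellN d lo hi i)}) : {ffun 'I_n -> int} :=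
  [ffun i => Num.floor (lo i / d) + (j i : nat)%:Z].
Arguments cellg : clear implicits.

Lemma cell_codom (d : R) (lo hi : 'I_n -> R) (z : 'rV[R]_n) : 0 < d ->
  (forall i, lo i <= z ord0 i <= hi i) -> cell d z \in codom (cellg d lo hi).
Proof.
move=> d0 zb.
have bnd i : Num.floor (lo i / d) <= Num.floor (z ord0 i / d) <= Num.floor (hi i / d).
  by have /andP[zl zh] := zb i; rewrite !le_floor_div.
have lt_cellN i : (absz (Num.floor (z ord0 i / d) - Num.floor (lo i / d)) < cellN d lo hi i)%N.
  by have /andP[lz zh] := bnd i; rewrite /cellN max_r; lia.
apply/codomP; exists (finfun (fun i => Ordinal (lt_cellN i))).
apply/ffunP => i; rewrite !ffunE /=; have /andP[lz _] := bnd i.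
by rewrite gez0_abs ?subr_ge0 // addrCA subrr addr0.
Qed.

Lemma cellN_mul_le (d : R) (lo hi : 'I_n -> R) (i : 'I_n) : 0 < d ->
  (cellN d lo hi i)%:R * d <= Num.max 0 (hi i - lo i) + 2 * d.
Proof.
move=> d0; have m0 : 0 <= Num.max 0 (hi i - lo i) by rewrite le_max lexx.
rewrite /cellN natr_absz ger0_norm ?le_max ?lexx //.
set k := (_ - _ + 1).
have [k_le0|k_gt0] := leP k 0; first by rewrite mulr0z mul0r; lra.
have /andP[H_le _] := floor_itv (hi i / d).
have /andP[_ L_gt] := floor_itv (lo i / d).
rewrite /k intrD intrB; rewrite intrD in L_gt.
have hi_lo : hi i - lo i = (hi i / d - lo i / d) * d by field; lra.
rewrite hi_lo; apply: le_trans (_ : (hi i / d - lo i / d + 2) * d <= _).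
  by rewrite ler_pM2r //; lra.
by rewrite mulrDl lerD2r le_max lexx orbT.
Qed.

Lemma count_cells_le (d : R) (lo hi : 'I_n -> R) (P : pred 'rV[R]_n) (zs : seq 'rV[R]_n) :
  0 < d -> uniq (map (cell d) zs) ->
  (forall z, z \in zs -> P z -> forall i, lo i <= z ord0 i <= hi i) ->
  (count P zs)%:R * d ^+ n <= \prod_(i < n) (Num.max 0 (hi i - lo i) + 2 * d).
Proof.
move=> d0 uzs zb.
have cnt : (count P zs <= \prod_(i < n) cellN d lo hi i)%N.
  have sub : {subset map (cell d) (seq.filter P zs) <= codom (cellg d lo hi)}.
    move=> c /mapP[z]; rewrite mem_filter => /andP[Pz zzs] ->.
    exact: cell_codom (zb z zzs Pz).
  have := uniq_leq_size (subseq_uniq (map_subseq _ (filter_subseq P zs)) uzs) sub.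
  rewrite size_map size_filter size_codom card_dep_ffun foldrE big_map /=.
  by under eq_bigr do rewrite card_ord; rewrite big_enum.
apply: (@le_trans _ _ ((\prod_(i < n) cellN d lo hi i)%:R * d ^+ n)).
  by apply: ler_wpM2r; [exact: exprn_ge0 (ltW d0) | rewrite ler_nat].
rewrite natr_prod -[in d ^+ n](card_ord n) -prodr_const -big_split /=.
apply: ler_prod => i _; apply/andP; split; last exact: cellN_mul_le.
by rewrite mulr_ge0 // ltW.
Qed.

End Cells.
Arguments cellg {R n} d lo hi j.

Section Covers.
Variables (R : realType) (n : nat).

Lemma compact_coord_bounded (K : set 'rV[R]_n) : compact K ->
  exists B : R, forall z, K z -> forall i, -B <= z ord0 i <= B.
Proof.
move=> cK; have [M [_ normM]] := compact_bounded cK.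
exists (M + 1) => z /(normM (M + 1)) zM i; rewrite -ler_norml.
apply: le_trans (zM _); last by rewrite ltrDl.
rewrite [leRHS]/Num.Def.normr /= mx_normrE; apply/bigmax_geP; right.
by exists (ord0, i).
Qed.

Lemma cell_representatives (P : set 'rV[R]_n) (d : R) (lo hi : 'I_n -> R) : 0 < d ->
  (forall z, P z -> forall i, lo i <= z ord0 i <= hi i) ->
  exists zs : seq 'rV[R]_n, [/\ forall z, z \in zs -> P z, uniq (map (cell d) zs) &
    forall z, P z -> exists2 y, y \in zs & cell d y = cell d z].
Proof.
move=> d0 Pb.
pose hit c := `[< exists z, P z /\ cell d z = c >].
pose cs := undup [seq c <- codom (cellg d lo hi) | hit c].
pose pick c := get [set z | P z /\ cell d z = c].
have pickP c : c \in cs -> P (pick c) /\ cell d (pick c) = c.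
  by rewrite mem_undup mem_filter => /andP[/asboolP hz _]; exact: (getPex hz).
have cell_pick : map (cell d) (map pick cs) = cs.
  by rewrite -map_comp -[RHS]map_id; apply/eq_in_map => c /pickP[].
exists (map pick cs); split.
- by move=> _ /mapP[c /pickP[Pc _] ->].
- by rewrite cell_pick undup_uniq.
- move=> z Pz; have cs_z : cell d z \in cs.
    by rewrite mem_undup mem_filter cell_codom ?andbT //; [apply/asboolP; exists z|exact: Pb].
  by exists (pick (cell d z)); [exact: map_f|exact: (pickP _ cs_z).2].
Qed.

Lemma lebesgue_outer_le_cells (K : set 'rV[R]_n) (d : R) (lo hi : 'I_n -> R) :
  (0 < n)%N -> 0 < d -> (forall z, K z -> forall i, lo i <= z ord0 i <= hi i) ->
  exists zs : seq 'rV[R]_n, [/\ forall z, z \in zs -> K z, uniq (map (cell d) zs) &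
    (lebesgue_outer K <= ((size zs)%:R * d ^+ n)%:E)%E].
Proof.
move=> n0 d0 Kb; have [zs [zsK uzs rep]] := cell_representatives d0 Kb.
exists zs; split => //.
pose cbox (y : 'rV[R]_n) := (fun i => d * (cell d y i)%:~R, fun i => d * (cell d y i)%:~R + d).
apply: (le_trans (lebesgue_outer_le_boxes (bs := map cbox zs) n0 _)).
  move=> z /rep[y yzs cyz]; exists (cbox y); first exact: map_f.
  by rewrite /= cyz; exact: box_cell.
rewrite big_map (eq_bigr (fun=> d ^+ n)) => [|y _]; last exact: boxvol_cell.
by rewrite big_const_seq count_predT iter_addr_0 mulr_natl.
Qed.

Lemma count_translate_le (T : set 'rV[R]_n) (s : seq nat) (lo hi : nat -> 'I_n -> R)
    (d : R) (zs : seq 'rV[R]_n) (x : 'rV[R]_n) :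
  0 < d -> uniq (map (cell d) zs) ->
  (forall y, T y -> exists2 k, k \in s & obox (lo k) (hi k) y) ->
  (count (fun z => x - z \in T) zs)%:R * d ^+ n <=
  \sum_(k <- s) \prod_(i < n) (Num.max 0 (hi k i - lo k i) + 2 * d).
Proof.
move=> d0 uzs Tcov.
pose inbox k z := x - z \in obox (lo k) (hi k).
apply: (@le_trans _ _ ((\sum_(k <- s) count (inbox k) zs)%:R * d ^+ n)).
  apply: ler_wpM2r; first exact: exprn_ge0 (ltW d0).
  rewrite ler_nat; apply: count_le_sum_cover => z /set_mem /Tcov[k ks kz].
  by apply/hasP; exists k => //; exact: mem_set.
rewrite natr_sum mulr_suml; apply: ler_sum => k _.
rewrite (eq_bigr (fun i => Num.max 0 ((x ord0 i - lo k i) - (x ord0 i - hi k i)) + 2 * d));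
  last by move=> i _; congr (Num.max _ _ + _); ring.
apply: count_cells_le => // z _ /set_mem xz i.
by have := xz i; rewrite !mxE => /andP[? ?]; apply/andP; split; lra.
Qed.

End Covers.

Section Packing.
Variables (R : realType) (n : nat).

Lemma M_omega_ge (K T : set 'rV[R]_n) (s : seq (R * 'rV[R]_n)) :
  discrete_nonneg s -> (forall x, dconv s T x <= 1) -> ((dmeasure s K)%:E <= M_omega K T)%E.
Proof. by move=> s0 s1; apply: ereal_sup_ubound; exists s. Qed.

Lemma M_omega_ge1 (K T : set 'rV[R]_n) : K !=set0 -> (1%:E <= M_omega K T)%E.
Proof.
move=> [z Kz]; have := @M_omega_ge K T [:: (1, z)].
rewrite /dmeasure big_seq1 mul1r indicE mem_set //; apply.
  by move=> p; rewrite inE => /eqP ->.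
by move=> x; rewrite /dconv big_seq1 mul1r indicE; case: (_ \in _).
Qed.

Lemma dmeasure_const (w : R) (zs : seq 'rV[R]_n) (A : set 'rV[R]_n) :
  dmeasure [seq (w, z) | z <- zs] A = w * (count (fun z => z \in A) zs)%:R.
Proof. by rewrite /dmeasure big_map (sum_mul_indic _ id). Qed.

Lemma dconv_const (w : R) (zs : seq 'rV[R]_n) (T : set 'rV[R]_n) (x : 'rV[R]_n) :
  dconv [seq (w, z) | z <- zs] T x = w * (count (fun z => x - z \in T) zs)%:R.
Proof. by rewrite /dconv big_map sum_mul_indic. Qed.

Lemma M_omega_ge_of_lt (K T : set 'rV[R]_n) (r : R) : (0 < n)%N -> compact K -> compact T ->
  0 < Vol T -> 0 < r -> r * Vol T < Vol K -> (r%:E <= M_omega K T)%E.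
Proof.
move=> n0 cK cT VT0 r0 rVT.
have VK0 : 0 < Vol K by apply: lt_trans rVT; rewrite mulr_gt0.
(* [Vol T + 2 * e = Vol K / r] *)
pose e := (Vol K / r - Vol T) / 2.
have e0 : 0 < e by rewrite divr_gt0 // subr_gt0 ltr_pdivlMr // mulrC.
have [s [lo [hi [Tcov sum_s]]]] := compact_obox_finite_cover cT (lebesgue_outer_Vol VT0) e0.
have [|t t0 sum_t] := sum_prod_addr_le s (index_enum 'I_n)
  (m := fun k i => Num.max 0 (hi k i - lo k i)) _ e0; first by move=> k i; rewrite le_max lexx.
pose d := t / 2; have d0 : 0 < d by rewrite divr_gt0.
have [B KB] := compact_coord_bounded cK.
have [zs [zsK uzs /Vol_le_lebesgue_outer VK_le]] := lebesgue_outer_le_cells n0 d0 KB.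
pose w := d ^+ n * r / Vol K.
have w0 : 0 <= w by rewrite /w divr_ge0 ?mulr_ge0 ?exprn_ge0 // ltW.
apply: le_trans (@M_omega_ge K T [seq (w, z) | z <- zs] _ _).
- rewrite dmeasure_const (eq_in_count (a2 := predT)) ?count_predT; last first.
    by move=> z /zsK Kz; exact: mem_set.
  rewrite lee_fin /w mulrAC ler_pdivlMr //.
  by rewrite (_ : _ * _%:R = r * ((size zs)%:R * d ^+ n)) ?ler_pM2l //; ring.
- by move=> _ /mapP[z _ ->].
move=> x; rewrite dconv_const /w mulrAC ler_pdivrMr // mul1r.
have := count_translate_le x d0 uzs Tcov; rewrite (_ : 2 * d = t); last by rewrite mulrC divfK.
move=> cnt_le; rewrite mulrAC -ler_pdivlMr //.
move: sum_s sum_t; rewrite /boxvol /e; lra.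
Qed.

End Packing.

Lemma Vol_ratio_le1_dim0 (R : realType) (K T : set 'rV[R]_0) :
  K !=set0 -> T !=set0 -> Vol K / Vol T <= 1.
Proof.
move=> [z Kz] [t Tt].
have -> : K = T.
  by apply/seteqP; split => y _; rewrite (thinmx0 y); [rewrite -(thinmx0 t)|rewrite -(thinmx0 z)].
by have [->|VT0] := eqVneq (Vol T) 0; rewrite ?invr0 ?mulr0 ?mulfV.
Qed.

Theorem proposition2p10 (R : realType) (n : nat) (K T : set 'rV[R]_n) :
  compact K -> K !=set0 ->
  compact T -> (interior T) !=set0 ->
  ((Num.max (Vol K / Vol T) 1)%:E <= M_omega K T)%E.
Proof.
move=> cK K0 cT [t /interior_subset Tt].
have M1 := M_omega_ge1 T K0.
have [le1|gt1] := leP (Vol K / Vol T) 1; first exact: M1.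
have n0 : (0 < n)%N.
  case: n K T K0 t Tt gt1 {cK cT M1} => // K T K0 t Tt.
  by rewrite ltNge Vol_ratio_le1_dim0 //; exists t.
have VT0 : 0 < Vol T.
  rewrite lt0r Vol_ge0 andbT; apply: contraTneq gt1 => ->.
  by rewrite invr0 mulr0 ltNge ler01.
case EM : (M_omega K T) M1 => [m||] //; last by move=> _; rewrite leey.
rewrite !lee_fin => m1; apply/ler_ltP => r r_lt.
have [r_le1|r_gt1] := leP r 1; first exact: le_trans m1.
rewrite -lee_fin -EM; apply: M_omega_ge_of_lt => //; first lra.
by rewrite -ltr_pdivlMr.
Qed.
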